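(* Let $m_1\ge1$, $m_2\ge0$, and let $F_i:[0,\infty)^{m_1}\to\mathbb{R}$, $G_i:[0,\infty)^{m_1+m_2}\to\mathbb{R}$ ($i=1,\dots,m_1$), $H_j:[0,\infty)^{m_1+m_2}\to\mathbb{R}$ ($j=1,\dots,m_2$). Assume there exist an $(m_1+m_2)\times(m_1+m_2)$ lower triangular matrix $A=(a_{kl})$ with nonnegative entries and diagonal entries $1$, exponents $p_\Omega,p_M,\mu_M$ and a constant $L_2\ge0$ such that for all $u\in[0,\infty)^{m_1},v\in[0,\infty)^{m_2}$: for every $k$, $\sum_{l\le m_1}a_{kl}F_l(u)\le L_2(\sum_iu_i^{p_\Omega}+1)$; for $k\le m_1$, $\sum_{l\le m_1}a_{kl}G_l(u,v)\le L_2(\sum_iu_i^{p_M}+\sum_jv_j^{p_M}+1)$; for $k>m_1$, $\sum_{l\le m_1}a_{kl}G_l(u,v)+\sum_{l\le m_2}a_{k,m_1+l}H_l(u,v)\le L_2(\sum_iu_i^{\mu_M}+\sum_jv_j^{\mu_M}+1)$. Then there exist componentwise increasing functions $g_j:\mathbb{R}^{m_1-j}\to\mathbb{R}$, $j=1,\dots,m_1-1$, such that whenever $\ell\in(0,\infty)^{m_1}$ satisfies $\ell_j>g_j(\ell_{j+1},\dots,\ell_{m_1})$ for $j=1,\dots,m_1-1$, there exists $L_\ell>0$ with $$\sum_{i=1}^{m_1}\ell_iF_i(u)\le L_\ell\Big(\sum_{i=1}^{m_1}u_i^{p_\Omega}+1\Big)\ \ \forall u\in[0,\infty)^{m_1},\qquad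 \sum_{i=1}^{m_1}\ell_iG_i(u,v)\le L_\ell\Big(\sum_{i=1}^{m_1}u_i^{p_M}+\sum_{j=1}^{m_2}v_j^{p_M}+1\Big)\ \ \forall u,v\ge0.$$ *)

From HB Require Import structures.
From mathcomp Require Import all_boot all_order all_algebra.
From mathcomp Require Import all_classical all_reals all_analysis.
Set Implicit Arguments. Unset Strict Implicit. Unset Printing Implicit Defensive.
Import Order.TTheory GRing.Theory Num.Theory.
Local Open Scope ring_scope.

Definition admissible_mx (R : realType) (n : nat) (A : 'M[R]_n) : Prop :=
  (forall k l : 'I_n, (k < l)%N -> A k l = 0) /\
  (forall k l : 'I_n, 0 <= A k l) /\
  (forall k : 'I_n, A k k = 1).

Definition sumpow (R : realType) (n : nat) (x : 'I_n -> R) (p : R) : R :=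
  \sum_(i < n) (x i) `^ p.

Definition comp_incr (R : realType) (n : nat) (f : ('I_n -> R) -> R) : Prop :=
  forall x y : 'I_n -> R, (forall k, x k <= y k) -> f x <= f y.

From HB Require Import structures.
From mathcomp Require Import all_boot all_order all_algebra.
From mathcomp Require Import all_classical all_reals all_analysis.
Import Order.TTheory GRing.Theory Num.Theory.
Local Open Scope ring_scope.

(* The upper-left m1 x m1 block B of A is lower unitriangular, hence
   invertible, so every weight vector can be written ell = c B, i.e.
   ell_l = sum_k c_k B_kl.  Then sum_i ell_i F_i = sum_k c_k (sum_l B_kl F_l)
   is at most (sum_k c_k) L2 (sum_i u_i^p + 1) as soon as c >= 0, and the same
   holds for G.  Back-substitution c_j = ell_j - sum_(k > j) c_k B_kj shows by
   downward induction on j that 0 <= c <= ell whenever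
   ell_j > sum_(k > j) B_kj ell_k =: g_j(ell_(j+1), ..., ell_m1). *)

Lemma ler_sum_row_comb {R : numDomainType} {p n} {B : 'M[R]_(p, n)}
    {c : 'I_p -> R} {ell Phi : 'I_n -> R} {K : R} :
  (forall l, ell l = \sum_k c k * B k l) -> (forall k, 0 <= c k) ->
  (forall k, \sum_l B k l * Phi l <= K) ->
  \sum_i ell i * Phi i <= (\sum_k c k) * K.
Proof.
move=> ell_c c_ge0 row_le.
have -> : \sum_i ell i * Phi i = \sum_k c k * \sum_i B k i * Phi i.
  under eq_bigr => i _ do rewrite ell_c mulr_suml.
  rewrite exchange_big /=; apply: eq_bigr => k _; rewrite mulr_sumr.
  by apply: eq_bigr => i _; rewrite mulrA.
by rewrite mulr_suml; apply: ler_sum => k _; exact: ler_wpM2l.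
Qed.

Lemma big_ord_gt (V : nmodType) m j (h : 'I_m.+1 -> V) :
  \sum_(k < m.+1 | (j < k)%N) h k = \sum_(i < m - j) h (inord (j.+1 + i)).
Proof.
transitivity (\sum_(j.+1 <= k < m.+1) h (inord k)).
  by rewrite big_geq_mkord; apply: eq_big => [//|k _]; rewrite inord_val.
rewrite -{1}(add0n j.+1) big_addn subSS big_mkord.
by apply: eq_bigr => i _; rewrite addnC.
Qed.

Section LowerUnitriangular.

Context {R : realFieldType} {n : nat} {B : 'M[R]_n}.
Hypothesis B_lower : forall k l : 'I_n, (k < l)%N -> B k l = 0.
Hypothesis B_diag : forall k, B k k = 1.

Lemma unitriangular_unitmx : B \in unitmx.
Proof.
rewrite unitmxE det_trig; last by apply/is_trig_mxP => i j; exact: B_lower.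
by rewrite big1 ?unitr1.
Qed.

Lemma unitriangular_row_coords (ell : 'I_n -> R) :
  exists c : 'I_n -> R, forall l, ell l = \sum_k c k * B k l.
Proof.
exists (fun k => (\row_i ell i *m invmx B) 0 k) => l.
have -> : ell l = (\row_i ell i *m invmx B *m B) 0 l.
  by rewrite mulmxKV ?unitriangular_unitmx // mxE.
by rewrite mxE.
Qed.

Lemma unitriangular_coordE {c ell : 'I_n -> R} :
    (forall l, ell l = \sum_k c k * B k l) ->
  forall j : 'I_n, c j = ell j - \sum_(k : 'I_n | (j < k)%N) c k * B k j.
Proof.
move=> ell_c j; rewrite ell_c (bigD1 j) //= B_diag mulr1.
suff -> : \sum_(k | k != j) c k * B k j = \sum_(k : 'I_n | (j < k)%N) c k * B k j.
  by rewrite addrK.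
rewrite big_mkcond [RHS]big_mkcond; apply: (@eq_bigr _ _ _ 'I_n) => k _ /=.
case: (ltngtP k j) => [lt_kj|lt_jk|/val_inj->]; last by rewrite eqxx.
- by rewrite B_lower // mulr0 if_same.
- by rewrite -val_eqE gtn_eqF.
Qed.

Hypothesis B_ge0 : forall k l, 0 <= B k l.

Lemma unitriangular_coords_ge0 {c ell : 'I_n -> R} :
    (forall l, ell l = \sum_k c k * B k l) ->
    (forall j : 'I_n, \sum_(k : 'I_n | (j < k)%N) B k j * ell k < ell j) ->
  forall k, 0 <= c k.
Proof.
move=> ell_c ell_dom.
suff c_between t : forall j : 'I_n, (n - j <= t)%N -> 0 <= c j <= ell j.
  by move=> k; case/andP: (c_between n k (leq_subr _ _)).
elim: t => [|t IHt] j; first by rewrite leqn0 subn_eq0 leqNgt ltn_ord.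
move=> le_nj_t; have IHk (k : 'I_n) : (j < k)%N -> 0 <= c k <= ell k.
  by move=> lt_jk; apply: IHt; rewrite -ltnS (leq_trans _ le_nj_t) // ltn_sub2l.
have S_ge0 : 0 <= \sum_(k : 'I_n | (j < k)%N) c k * B k j.
  by apply: sumr_ge0 => k /IHk/andP[c_ge0 _]; exact: mulr_ge0.
have S_le : \sum_(k : 'I_n | (j < k)%N) c k * B k j
            <= \sum_(k : 'I_n | (j < k)%N) B k j * ell k.
  by apply: ler_sum => k /IHk/andP[_ c_le]; rewrite mulrC ler_wpM2l.
rewrite (unitriangular_coordE ell_c) subr_ge0 gerBl S_ge0 andbT.
exact/ltW/(le_lt_trans S_le).
Qed.

End LowerUnitriangular.

Definition below_diag_comb {R : realType} {m} (B : 'M[R]_m.+1) (j : 'I_m)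
    (x : 'I_(m - j) -> R) : R :=
  \sum_(i < m - j) B (inord (j.+1 + i)) (widen_ord (leqnSn m) j) * x i.

Lemma below_diag_comb_incr {R : realType} {m} (B : 'M[R]_m.+1) (j : 'I_m) :
  (forall k l, 0 <= B k l) -> comp_incr (below_diag_comb B j).
Proof. by move=> B_ge0 x y le_xy; apply: ler_sum => i _; exact: ler_wpM2l. Qed.

Lemma column_dominance {R : realType} {m} {B : 'M[R]_m.+1} {ell : 'I_m.+1 -> R} :
    (forall i, 0 < ell i) ->
    (forall j : 'I_m,
       ell (widen_ord (leqnSn m) j)
         > below_diag_comb B j (fun k => ell (inord (j.+1 + k)))) ->
  forall j : 'I_m.+1, \sum_(k : 'I_m.+1 | (j < k)%N) B k j * ell k < ell j.
Proof.
move=> ell_gt0 ell_dom j; have [lt_jm|le_mj] := ltnP j m.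
  have := ell_dom (Ordinal lt_jm); rewrite /below_diag_comb.
  have -> : widen_ord (leqnSn m) (Ordinal lt_jm) = j by exact: val_inj.
  by rewrite big_ord_gt.
rewrite big_pred0 // => k; apply/negbTE; rewrite -leqNgt.
exact: leq_trans (leq_ord k) le_mj.
Qed.

Lemma sumpow_ge0 (R : realType) n (x : 'I_n -> R) p : 0 <= sumpow x p.
Proof. by apply: sumr_ge0 => i _; exact: powR_ge0. Qed.

(* m1 = m.+1 (so m1 >= 1); indices are 0-based ordinals. *)
Theorem lemma2p3 (R : realType) (m m2 : nat)
  (F : 'I_m.+1 -> ('I_m.+1 -> R) -> R)
  (G : 'I_m.+1 -> ('I_m.+1 -> R) -> ('I_m2 -> R) -> R)
  (H : 'I_m2 -> ('I_m.+1 -> R) -> ('I_m2 -> R) -> R)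
  (A : 'M[R]_(m.+1 + m2)) (pO pM muM L2 : R) :
  admissible_mx A -> 0 <= L2 ->
  (forall (u : 'I_m.+1 -> R), (forall i, 0 <= u i) ->
     forall k : 'I_(m.+1 + m2),
       \sum_(l < m.+1) A k (lshift m2 l) * F l u <= L2 * (sumpow u pO + 1)) ->
  (forall (u : 'I_m.+1 -> R) (v : 'I_m2 -> R),
     (forall i, 0 <= u i) -> (forall j, 0 <= v j) ->
     forall k : 'I_m.+1,
       \sum_(l < m.+1) A (lshift m2 k) (lshift m2 l) * G l u v
         <= L2 * (sumpow u pM + sumpow v pM + 1)) ->
  (forall (u : 'I_m.+1 -> R) (v : 'I_m2 -> R),
     (forall i, 0 <= u i) -> (forall j, 0 <= v j) ->
     forall k : 'I_m2,
       \sum_(l < m.+1) A (rshift m.+1 k) (lshift m2 l) * G l u v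
       + \sum_(l < m2) A (rshift m.+1 k) (rshift m.+1 l) * H l u v
         <= L2 * (sumpow u muM + sumpow v muM + 1)) ->
  exists g : forall j : 'I_m, ('I_(m - j) -> R) -> R,
    (forall j : 'I_m, comp_incr (g j)) /\
    forall ell : 'I_m.+1 -> R,
      (forall i, 0 < ell i) ->
      (forall j : 'I_m,
         ell (widen_ord (leqnSn m) j) > g j (fun k : 'I_(m - j) => ell (inord (j.+1 + k)))) ->
      exists Lell : R, 0 < Lell /\
        (forall u : 'I_m.+1 -> R, (forall i, 0 <= u i) ->
           \sum_(i < m.+1) ell i * F i u <= Lell * (sumpow u pO + 1)) /\
        (forall (u : 'I_m.+1 -> R) (v : 'I_m2 -> R),
           (forall i, 0 <= u i) -> (forall j, 0 <= v j) ->
           \sum_(i < m.+1) ell i * G i u v <= Lell * (sumpow u pM + sumpow v pM + 1)).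
Proof.
move=> [A_lower [A_ge0 A_diag]] L2_ge0 HF HG _.
pose B : 'M[R]_m.+1 := \matrix_(k, l) A (lshift m2 k) (lshift m2 l).
have B_lower (k l : 'I_m.+1) : (k < l)%N -> B k l = 0.
  by move=> lt_kl; rewrite mxE A_lower.
have B_ge0 k l : 0 <= B k l by rewrite mxE.
have B_diag k : B k k = 1 by rewrite mxE A_diag.
exists (below_diag_comb B); split => [j|ell ell_gt0 ell_dom].
  exact: below_diag_comb_incr.
have [c ell_c] := unitriangular_row_coords B_lower B_diag ell.
have c_ge0 := unitriangular_coords_ge0 B_lower B_diag B_ge0 ell_c
  (column_dominance ell_gt0 ell_dom).
pose C := \sum_k c k.
have row_comb_le (Phi : 'I_m.+1 -> R) X : 0 <= X ->
    (forall k, \sum_l B k l * Phi l <= L2 * X) ->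
  \sum_i ell i * Phi i <= (C * L2 + 1) * X.
  move=> X_ge0 rows_le; apply: le_trans (ler_sum_row_comb ell_c c_ge0 rows_le) _.
  by rewrite mulrA; apply: ler_wpM2r; rewrite ?lerDl.
exists (C * L2 + 1); split; first by rewrite ltr_wpDl ?mulr_ge0 ?sumr_ge0.
split=> [u u_ge0|u v u_ge0 v_ge0]; apply: row_comb_le => [|k].
- by rewrite addr_ge0 ?sumpow_ge0.
- by under eq_bigr do rewrite mxE; exact: HF.
- by rewrite !addr_ge0 ?sumpow_ge0.
- by under eq_bigr do rewrite mxE; exact: HG.
Qed.
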